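(* Fix parameters $1\ge p_1\ge p_2\ge\cdots\ge p_r>0$. If $Z_{p_{i+1},p_i}$, $i=1,\dots,r-1$, are independent random variables with the indicated zero-inflated geometric distributions, then \[ \sum_{i=1}^{r-1}Z_{p_{i+1},p_i}\ \stackrel{d}{=}\ Z_{p_r,p_1}. \]
   Context: ${\rm Geom}(q)$ is the geometric distribution on $\{1,2,\dots\}$ with $\Pr(G=j)=(1-q)^{j-1}q$. For $0\le q\le p\le 1$, the zero-inflated geometric random variable is $Z_{q,p}:=B\cdot G$ where $B\sim{\rm Bernoulli}(1-q/p)$ and $G\sim{\rm Geom}(q)$ are independent. $\stackrel{d}{=}$ denotes equality in distribution. *)

From HB Require Import structures.
From mathcomp Require Import all_boot all_order all_algebra.
From mathcomp Require Import all_classical all_reals all_analysis.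
Set Implicit Arguments. Unset Strict Implicit. Unset Printing Implicit Defensive.
Import Order.TTheory GRing.Theory Num.Theory.
Local Open Scope classical_set_scope.
Local Open Scope ring_scope.

(* Probability mass function of the zero-inflated geometric law Z_{q,p} = B * G,
   B ~ Bernoulli(1 - q/p), G ~ Geom(q) on {1,2,...}, B and G independent:
   P(Z = 0) = q/p,  P(Z = j) = (1 - q/p) (1-q)^(j-1) q  for j >= 1. *)
Definition zig_pmf (R : realType) (q p : R) (j : nat) : R :=
  if j is j'.+1 then (1 - q / p) * ((1 - q) ^+ j' * q) else q / p.

Definition nat_rv (d : measure_display) (T : measurableType d) (X : T -> nat) :=
  forall k : nat, measurable (X @^-1` [set k]).

Definition has_zig_law (d : measure_display) (T : measurableType d) (R : realType)
  (P : probability T R) (X : T -> nat) (q p : R) :=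
  forall k : nat, P (X @^-1` [set k]) = (zig_pmf q p k)%:E.

(* Mutual independence of the discrete random variables X i, i \in I:
   for every finite subfamily J of distinct indices of I and every choice of
   values k i, the joint probability factorizes (for discrete random variables
   this is the usual definition of independence of the generated sigma-algebras). *)
Definition mutually_independent_nat (d : measure_display) (T : measurableType d)
  (R : realType) (P : probability T R) (I : seq nat) (X : nat -> T -> nat) :=
  forall J : seq nat, {subset J <= I} -> uniq J -> forall k : nat -> nat,
    P [set t | forall i, i \in J -> X i t = k i]
    = \big[mule/1%E]_(i <- J) P (X i @^-1` [set k i]).

From HB Require Import structures.
From mathcomp Require Import all_boot all_order all_algebra.
From mathcomp Require Import all_classical all_reals all_analysis.
From mathcomp Require Import ring zify.
Import Order.TTheory GRing.Theory Num.Theory.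
Local Open Scope classical_set_scope.
Local Open Scope ring_scope.

(* The laws compose: convolving the laws of Z_{a,c} and Z_{b,a} gives the law
   of Z_{b,c}, an algebraic identity between the mass functions that reduces
   to the formula for x^N - y^N.  By induction on m, the partial sum
   Z_1 + ... + Z_{m-1} therefore has the law of Z_{p_m,p_1}; to keep
   independence available for the next step, this is proved jointly with the
   variables Z_i, i >= m, i.e. the partial sum is also shown independent of
   them. *)

Lemma nonincreasing_ge_last {R : numDomainType} {p : nat -> R} {a b i : nat} :
  (forall j, (a <= j < b)%N -> p j.+1 <= p j) -> (a <= i <= b)%N -> p b <= p i.
Proof.
move=> p_nonincr /andP[ai ib]; rewrite -(subnKC ib).
have : (i + (b - i) <= b)%N by lia.
elim: (b - i)%N => [|k IH] ikb; first by rewrite addn0.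
rewrite addnS; apply: le_trans (IH _); last by lia.
by apply: p_nonincr; lia.
Qed.

Section ZigPmf.
Variable R : realType.

Lemma zig_pmf_diag (p : R) (n : nat) : p != 0 -> zig_pmf p p n = (n == 0)%:R.
Proof. by move=> p0; case: n => [|n] /=; rewrite divff // subrr mul0r. Qed.

Lemma zig_pmf_conv (a b c : R) (n : nat) : a != 0 -> c != 0 ->
  \sum_(j < n.+1) zig_pmf a c (n - j) * zig_pmf b a j = zig_pmf b c n.
Proof.
move=> a0 c0; case: n => [|N].
  by rewrite big_ord_recr big_ord0 /= add0r; field; apply/andP.
rewrite big_ord_recr big_ord_recl /= subnn.
set s := \sum_(i < N) (1 - a) ^+ (N.-1 - i) * (1 - b) ^+ i.
have inner : \sum_(i < N) zig_pmf a c (N.+1 - bump 0 i) * zig_pmf b a (bump 0 i)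
    = (1 - a / c) * a * (1 - b / a) * b * s.
  rewrite mulr_sumr; apply: eq_bigr => i _.
  rewrite /bump /= add1n subSS.
  have -> : (N - i = (N.-1 - i).+1)%N by case: i => i /=; lia.
  by rewrite /=; ring.
have geom : (1 - a) ^+ N = (1 - b) ^+ N + (b - a) * s.
  by rewrite -(subrK ((1 - b) ^+ N) ((1 - a) ^+ N)) subrXX -/s; ring.
by rewrite inner geom /=; field; apply/andP.
Qed.

End ZigPmf.

Section NatRandomVariables.
Context {d : measure_display} {T : measurableType d}.

Lemma preimage_addnI (X Y : T -> nat) (A : set T) (n : nat) :
  (fun t => X t + Y t)%N @^-1` [set n] `&` A =
  \big[setU/set0]_(j < n.+1)
     (X @^-1` [set (n - j)%N] `&` (Y @^-1` [set (j : nat)] `&` A)).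
Proof.
rewrite -(bigcup_mkord _ (fun j => X @^-1` [set (n - j)%N] `&` (Y @^-1` [set j] `&` A))).
apply/seteqP; split=> [t [/= <- At]|t [j /= jn [Xt [Yt At]]]].
  by exists (Y t) => /=; [lia | split; [lia | split]].
by split=> //=; lia.
Qed.

Lemma nat_rv_cst (c : nat) : nat_rv (fun _ : T => c).
Proof. by move=> k; rewrite preimage_cst; case: ifP. Qed.

Lemma nat_rv_addn (X Y : T -> nat) :
  nat_rv X -> nat_rv Y -> nat_rv (fun t => X t + Y t)%N.
Proof.
move=> mX mY n; rewrite -[_ @^-1` _]setIT preimage_addnI.
apply: bigsetU_measurable => j _.
by apply: measurableI; [exact: mX | apply: measurableI; [exact: mY | exact: measurableT]].
Qed.

Lemma measure_preimage_addnI (R : realType) (mu : {measure set T -> \bar R})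
    (X Y : T -> nat) (A : set T) (n : nat) :
  nat_rv X -> nat_rv Y -> measurable A ->
  mu ((fun t => X t + Y t)%N @^-1` [set n] `&` A) =
  \sum_(j < n.+1) mu (X @^-1` [set (n - j)%N] `&` (Y @^-1` [set (j : nat)] `&` A)).
Proof.
move=> mX mY mA.
pose F j := X @^-1` [set (n - j)%N] `&` (Y @^-1` [set j] `&` A).
have mF j : measurable (F j).
  by apply: measurableI; [exact: mX | apply: measurableI; [exact: mY | exact: mA]].
rewrite preimage_addnI (measure_semi_additive F) //.
- by move=> i j _ _ [t [[_ [<- _]] [_ [<- _]]]].
- by apply: bigsetU_measurable.
Qed.

Definition partial_sum (X : nat -> T -> nat) (m : nat) (t : T) : nat :=
  \sum_(1 <= i < m) X i t.

Lemma partial_sum_le1 (X : nat -> T -> nat) (m : nat) : (m <= 1)%N ->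
  partial_sum X m = fun=> 0%N.
Proof. by move=> m_le1; apply/funext => t; rewrite /partial_sum big_geq. Qed.

Lemma partial_sumS (X : nat -> T -> nat) (m : nat) : (1 <= m)%N ->
  partial_sum X m.+1 = fun t => (partial_sum X m t + X m t)%N.
Proof. by move=> m_ge1; apply/funext => t; rewrite /partial_sum big_nat_recr. Qed.

Lemma nat_rv_partial_sum (X : nat -> T -> nat) (m : nat) :
  (forall i, (1 <= i < m)%N -> nat_rv (X i)) -> nat_rv (partial_sum X m).
Proof.
elim: m => [|m IH] mX; first by rewrite partial_sum_le1 //; exact: nat_rv_cst.
case: (posnP m) => [->|m_gt0]; first by rewrite partial_sum_le1 //; exact: nat_rv_cst.
rewrite partial_sumS //; apply: nat_rv_addn; last by apply: mX; lia.
by apply: IH => i ?; apply: mX; lia.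
Qed.

Definition joint_event (X : nat -> T -> nat) (J : seq nat) (k : nat -> nat) : set T :=
  [set t | forall i, i \in J -> X i t = k i].

Lemma joint_event_nil (X : nat -> T -> nat) (k : nat -> nat) :
  joint_event X [::] k = setT.
Proof. by apply/seteqP; split=> t. Qed.

Lemma joint_event_cons (X : nat -> T -> nat) (i : nat) (J : seq nat) (k : nat -> nat) :
  joint_event X (i :: J) k = X i @^-1` [set k i] `&` joint_event X J k.
Proof.
apply/seteqP; split=> t /=.
  by move=> XJ; split=> [|j jJ]; apply: XJ; rewrite inE ?eqxx ?jJ ?orbT.
by move=> [Xi XJ] j; rewrite inE => /orP[/eqP->|/XJ].
Qed.

Lemma eq_joint_event (X : nat -> T -> nat) {J : seq nat} {k k' : nat -> nat} :
  {in J, k =1 k'} -> joint_event X J k = joint_event X J k'.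
Proof.
move=> kk'; apply/seteqP; split=> t XJ i iJ; rewrite XJ //.
  by rewrite kk'.
by rewrite -kk'.
Qed.

Lemma measurable_joint_event (X : nat -> T -> nat) (J : seq nat) (k : nat -> nat) :
  (forall i, i \in J -> nat_rv (X i)) -> measurable (joint_event X J k).
Proof.
elim: J => [|i J IH] mX; first by rewrite joint_event_nil.
rewrite joint_event_cons; apply: measurableI; first by apply: mX; rewrite inE eqxx.
by apply: IH => j jJ; apply: mX; rewrite inE jJ orbT.
Qed.

End NatRandomVariables.

Section PartialSumLaw.
Context {R : realType} {r : nat} {p : nat -> R}.
Context {d : measure_display} {T : measurableType d} {P : probability T R}.
Context {Z : nat -> T -> nat}.
Hypothesis p_gt0 : forall i, (1 <= i <= r)%N -> 0 < p i.
Hypothesis Z_rv : forall i, (1 <= i < r)%N -> nat_rv (Z i).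
Hypothesis Z_law : forall i, (1 <= i < r)%N -> has_zig_law P (Z i) (p i.+1) (p i).
Hypothesis Z_indep : mutually_independent_nat P (index_iota 1 r) Z.

Lemma joint_event_prob (J : seq nat) (k : nat -> nat) :
  {subset J <= index_iota 1 r} -> uniq J ->
  P (joint_event Z J k) = (\prod_(i <- J) zig_pmf (p i.+1) (p i) (k i))%:E.
Proof.
move=> sJ uJ; rewrite /joint_event Z_indep // -prodEFin.
by apply: eq_big_seq => i /sJ; rewrite mem_index_iota => ir; rewrite Z_law.
Qed.

Lemma partial_sum_joint_law (m : nat) (J : seq nat) (k : nat -> nat) (n : nat) :
  (1 <= m <= r)%N -> {subset J <= index_iota m r} -> uniq J ->
  P (partial_sum Z m @^-1` [set n] `&` joint_event Z J k) =
  (zig_pmf (p m) (p 1) n * \prod_(i <- J) zig_pmf (p i.+1) (p i) (k i))%:E.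
Proof.
elim: m J k n => [//|m IH] J k n /andP[_ mr] sJ uJ.
have sJ1 : {subset J <= index_iota 1 r}.
  by move=> i /sJ; rewrite !mem_index_iota; lia.
have p1_neq0 : p 1 != 0 by rewrite gt_eqF // p_gt0 //; lia.
case: (posnP m) => [->|m_gt0].
  rewrite partial_sum_le1 // preimage_cst zig_pmf_diag //.
  case: n => [|n]; first by rewrite mem_set //= setTI joint_event_prob // mul1r.
  by rewrite memNset //= set0I measure0 mul0r.
have m_notin_J : m \notin J by apply/negP => /sJ; rewrite mem_index_iota; lia.
rewrite partial_sumS // measure_preimage_addnI //; first last.
- by apply: measurable_joint_event => i /sJ1; rewrite mem_index_iota => ir; exact: Z_rv.
- by apply: Z_rv; lia.
- by apply: nat_rv_partial_sum => i ?; apply: Z_rv; lia.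
pose k_ (j : nat) i := if i == m then j else k i.
have k_J j : {in J, k_ j =1 k}.
  by move=> i iJ; rewrite /k_; case: eqP => // im; rewrite -im iJ in m_notin_J.
have summand j : P (partial_sum Z m @^-1` [set (n - j)%N] `&`
                 (Z m @^-1` [set j] `&` joint_event Z J k)) =
    (zig_pmf (p m) (p 1) (n - j) * zig_pmf (p m.+1) (p m) j *
     \prod_(i <- J) zig_pmf (p i.+1) (p i) (k i))%:E.
  have -> : Z m @^-1` [set j] `&` joint_event Z J k = joint_event Z (m :: J) (k_ j).
    by rewrite joint_event_cons (eq_joint_event Z (k_J j)) /k_ eqxx.
  rewrite IH; first last.
  - by rewrite /= m_notin_J.
  - by move=> i; rewrite inE => /orP[/eqP-> | /sJ]; rewrite !mem_index_iota; lia.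
  - by lia.
  rewrite big_cons {1}/k_ eqxx mulrA; congr (_ * _ * _)%:E.
  by apply: eq_big_seq => i /k_J ->.
rewrite (eq_bigr _ (fun (j : 'I_n.+1) _ => summand j)) sumEFin -mulr_suml.
by rewrite zig_pmf_conv // gt_eqF // p_gt0 //; lia.
Qed.

End PartialSumLaw.

Theorem mainTheorem3 (R : realType) (r : nat) (p : nat -> R)
  (d : measure_display) (T : measurableType d) (P : probability T R)
  (Z : nat -> T -> nat) :
  (1 <= r)%N ->
  p 1%N <= 1 ->
  (forall i : nat, (1 <= i < r)%N -> p i.+1 <= p i) ->
  0 < p r ->
  (forall i : nat, (1 <= i < r)%N -> nat_rv (Z i)) ->
  (forall i : nat, (1 <= i < r)%N -> has_zig_law P (Z i) (p i.+1) (p i)) ->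
  mutually_independent_nat P (index_iota 1 r) Z ->
  has_zig_law P (fun t => (\sum_(1 <= i < r) Z i t)%N) (p r) (p 1%N).
Proof.
move=> r_ge1 _ p_nonincr pr_gt0 Z_rv Z_law Z_indep n.
have p_gt0 i : (1 <= i <= r)%N -> 0 < p i.
  by move=> ir; apply: lt_le_trans (nonincreasing_ge_last p_nonincr ir).
rewrite -[_ @^-1` _]setIT -(joint_event_nil Z (fun=> 0%N)).
rewrite (partial_sum_joint_law p_gt0 Z_rv Z_law Z_indep) ?big_nil ?mulr1 //.
by rewrite r_ge1 leqnn.
Qed.
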